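(* Let $n$ be an even positive integer that is not a power of $2$. Let $V=\{v\in\{-1,1\}^n : v_1=1\}$, $P(V)=\{\sum_{v\in W}v : W\subseteq V\}$, $g(V)=\frac12\sum_{v\in V}v$, $\mathbf{1}=(1,\dots,1)\in\mathbb{R}^n$, $M=2^{n-2}-\frac12\binom{n-1}{n/2}$, and $K_M=\{(x_1,\dots,x_n)\in\mathbb{R}^n : x_i\le M\ \forall i\}$. Then \[0\in P(V)-g(V)-\tfrac12\binom{n-1}{n/2}\mathbf{1}\subset K_M.\] *)

From HB Require Import structures.
From mathcomp Require Import all_boot all_order all_algebra.
From mathcomp Require Import reals.
Unset Printing Implicit Defensive.
Import Order.TTheory GRing.Theory Num.Theory.
Local Open Scope ring_scope.

Definition sign_vec (R : nzRingType) (n : nat) (s : {ffun 'I_n -> bool}) : 'rV[R]_n :=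
  \row_i (if s i then 1 else -1).

(* Index set of V = { v in {-1,1}^n : v_1 = 1 } (v_1 is the coordinate of index 0). *)
Definition Vidx (n : nat) : {set {ffun 'I_n -> bool}} :=
  [set s : {ffun 'I_n -> bool} | [forall i : 'I_n, (nat_of_ord i == 0)%N ==> s i]].

Definition inV (R : nzRingType) (n : nat) (v : 'rV[R]_n) : Prop :=
  exists2 s, s \in Vidx n & v = sign_vec R n s.

(* P(V) = { sum_{v in W} v : W subset of V }.  Since sign_vec is injective,
   subsets of V correspond exactly to subsets of Vidx n. *)
Definition inPV (R : nzRingType) (n : nat) (x : 'rV[R]_n) : Prop :=
  exists2 W : {set {ffun 'I_n -> bool}}, W \subset Vidx n &
    x = \sum_(s in W) sign_vec R n s.

Definition gV (R : fieldType) (n : nat) : 'rV[R]_n :=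
  2^-1 *: \sum_(s in Vidx n) sign_vec R n s.

Definition ones (R : nzRingType) (n : nat) : 'rV[R]_n := \row_i 1.

Definition cst (R : fieldType) (n : nat) : R := ('C(n.-1, n./2))%:R / 2.

Definition Mval (R : fieldType) (n : nat) : R := 2 ^+ (n - 2) - cst R n.

Definition inK (R : numFieldType) (n : nat) (M : R) (x : 'rV[R]_n) : Prop :=
  forall i : 'I_n, x ord0 i <= M.

Definition inShift (R : fieldType) (n : nat) (y : 'rV[R]_n) : Prop :=
  exists2 x : 'rV[R]_n, inPV R n x & y = x - gV R n - cst R n *: ones R n.

From HB Require Import structures.
From mathcomp Require Import all_boot all_order all_algebra.
From mathcomp Require Import reals.
From mathcomp Require Import zify lra.
Import Order.TTheory GRing.Theory Num.Theory.

(* Write n = 2N and m = n - 1 = 2N - 1, and identify V with the subsets of Z/mZ (the coordinates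
   other than the first one, where v is 1 on the subset and -1 elsewhere).
   The inclusion in K_M is coordinatewise: since [v in W] v_i <= (v_i + 1)/2 for v_i = +-1, every
   coordinate of sum_(v in W) v - g(V) is at most |V|/2 = 2^(n-2).
   For 0 we need a family W of subsets with |W| = 2^(m-1) + c and every point in exactly
   (|W| + c)/2 of its members, where c = C(m, N)/2. We take W = {A : |A| >= N} together with a
   union H of half of the rotation orbits of the (N-1)-subsets. Every such orbit has size m, since
   rotating by t adds t to the phase 2 sum(A) (mod m); so the number C(m, N-1)/m of orbits is even,
   because 4 divides C(2N, N) when N is not a power of 2 (Legendre's formula counts the binary
   digits of N). Double counting over the rotation-invariant families H and {|A| = N} gives the
   degrees of the points. *)

Lemma logn2_bin_double N :
  logn 2 'C(N.*2, N) = \sum_(0 <= j < N.*2) (N %/ 2 ^ j) %% 2.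
Proof.
have C_gt0 : 0 < 'C(N.*2, N) by rewrite bin_gt0 -addnn leq_addr.
have := congr1 (logn 2) (bin_fact (leq_addr N N)).
rewrite addnK addnn lognM ?muln_gt0 ?fact_gt0 // lognM ?fact_gt0 //.
rewrite !logn_fact // !big_add1 /=.
have -> : \sum_(0 <= j < N) N %/ 2 ^ j.+1 = \sum_(0 <= j < N.*2) N %/ 2 ^ j.+1.
  rewrite [RHS](@big_cat_nat _ _ _ N) -?addnn ?leq_addr //=.
  rewrite [X in _ = _ + X]big1_seq ?addn0 // => j /andP[_].
  rewrite mem_index_iota => /andP[Nj _]; rewrite divn_small //.
  by rewrite (leq_ltn_trans Nj) // (ltn_trans (ltn_expl j (isT : 1 < 2))) ?ltn_exp2l.
have halve j : N.*2 %/ 2 ^ j.+1 = N %/ 2 ^ j.+1 + N %/ 2 ^ j.+1 + (N %/ 2 ^ j) %% 2.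
  rewrite [in LHS]expnS -mul2n divnMl // {1}(divn_eq (N %/ 2 ^ j) 2) -divnMA -expnSr.
  by rewrite muln2 addnn.
by rewrite (eq_bigr _ (fun j _ => halve j)) !big_split /=; lia.
Qed.

Lemma four_dvd_bin_double N : 0 < N -> ~ (exists a, N = 2 ^ a) -> 4 %| 'C(N.*2, N).
Proof.
move=> N_gt0 N_not_pow2.
have C_gt0 : 0 < 'C(N.*2, N) by rewrite bin_gt0 -addnn leq_addr.
rewrite -[4]/(2 ^ 2) pfactor_dvdn // logn2_bin_double.
(* The lowest and the highest binary digits of N are two distinct ones. *)
have [M coM defN] := pfactor_coprime (isT : prime 2) N_gt0.
set a := logn 2 N in defN.
have [lb ub] := andP (trunc_log_bounds (isT : 1 < 2) N_gt0).
set b := trunc_log 2 N in lb ub.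
have low_bit : N %/ 2 ^ a = M by rewrite defN mulnK ?expn_gt0.
have high_bit : N %/ 2 ^ b = 1.
  apply/eqP; rewrite eqn_leq -ltnS ltn_divLR ?expn_gt0 // -expnS ub /=.
  by rewrite divn_gt0 ?expn_gt0.
have ab : a != b.
  apply/eqP=> eq_ab; apply: N_not_pow2; exists b.
  by rewrite defN -low_bit eq_ab high_bit mul1n.
have lt_2N j : 2 ^ j <= N -> j < N.*2.
  move=> le_jN; rewrite (leq_trans (ltn_expl j (isT : 1 < 2))) //.
  by rewrite (leq_trans le_jN) // -addnn leq_addr.
have a_lt : a < N.*2 by rewrite lt_2N // dvdn_leq // pfactor_dvdnn.
rewrite big_mkord (bigD1 (Ordinal a_lt)) //= (bigD1 (Ordinal (lt_2N b lb))) /=.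
  by rewrite low_bit high_bit modn2 -coprime2n coM addnA leq_addr.
by apply/eqP => -[]; apply/eqP; rewrite eq_sym.
Qed.

Section SetFamilies.
Variable T : finType.
Implicit Types (i : T) (A : {set T}) (F G : {set {set T}}).

Definition deg F i := #|F :&: [set A : {set T} | i \in A]|.
Definition layer j := [set A : {set T} | #|A| == j].
Definition upper j := [set A : {set T} | j < #|A|].
Definition toggle i A := if i \in A then A :\ i else i |: A.

Lemma card_set : #|{set T}| = 2 ^ #|T|.
Proof. by rewrite -[LHS]cardsT -powersetT card_powerset cardsT. Qed.

Lemma sum_deg F : \sum_i deg F i = \sum_(A in F) #|A|.
Proof.
transitivity (\sum_i \sum_(A in F) (i \in A : nat)).
  apply: eq_bigr => i _; rewrite /deg -sum1_card big_mkcond [RHS]big_mkcond /=.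
  by apply: eq_bigr => A _; rewrite !inE; case: (A \in F); case: (i \in A).
rewrite exchange_big; apply: eq_bigr => A _.
by rewrite -sum1_card [RHS]big_mkcond.
Qed.

Lemma deg_setU F G i : [disjoint F & G] -> deg (F :|: G) i = deg F i + deg G i.
Proof.
move=> FG; rewrite /deg setIUl cardsU -[RHS]subn0; congr (_ - _).
by rewrite setIACA (disjoint_setI0 FG) set0I cards0.
Qed.

Lemma toggleK i : involutive (toggle i).
Proof.
move=> A; rewrite /toggle; have [iA | iA] := boolP (i \in A).
  by rewrite !inE eqxx /= setD1K.
by rewrite !inE eqxx /= setU1K.
Qed.

Lemma in_toggle i A : (i \in toggle i A) = (i \notin A).
Proof. by rewrite /toggle; case: ifP; rewrite !inE eqxx // => ->. Qed.

Lemma card_deg_setT i : deg [set: {set T}] i * 2 = 2 ^ #|T|.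
Proof.
rewrite -card_set -cardsT -(cardsID [set A : {set T} | i \in A]) muln2 -addnn.
congr (_ + _); rewrite -(card_preimset _ (can_inj (toggleK i))).
by rewrite /deg; apply: eq_card => A; rewrite !inE in_toggle negbK andbT.
Qed.

Lemma upperS j : upper j = upper j.+1 :|: layer j.+1.
Proof. by apply/setP => A; rewrite !inE; lia. Qed.

Lemma deg_upper j i : deg (upper j) i * 2 = #|upper j| + deg (layer j.+1) i.
Proof.
have disj : [disjoint upper j.+1 & layer j.+1].
  by rewrite -setI_eq0; apply/eqP/setP => A; rewrite !inE; lia.
have toggle_upper : #|upper j :\: [set A : {set T} | i \in A]| = deg (upper j.+1) i.
  rewrite -(card_preimset _ (can_inj (toggleK i))) /deg; apply: eq_card => A.
  rewrite !inE in_toggle negbK /toggle.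
  by case: ifP => iA; rewrite ?andbF ?andbT // (cardsD1 i A) iA.
rewrite -(cardsID [set A : {set T} | i \in A] (upper j)) -/(deg _ i) toggle_upper.
by have := deg_setU _ _ i disj; rewrite -upperS; lia.
Qed.

Lemma card_upper_half j : #|T| = j.*2.+1 -> #|upper j| * 2 = 2 ^ #|T|.
Proof.
move=> cardT; rewrite -card_set -(cardsC (upper j)).
rewrite muln2 -addnn; congr (_ + _).
rewrite -(card_preimset _ (@setC_inj T)); apply: eq_card => A; rewrite !inE.
by have := cardsC A; rewrite cardT; lia.
Qed.

End SetFamilies.

Arguments deg {T}.
Arguments toggle {T}.

Section CyclicShift.
Context {n : nat}.
Local Notation I := 'I_n.+1.
Implicit Types (i t u : I) (A : {set I}) (F G : {set {set I}}).

Definition shift t A := [set j | (j + t)%R \in A].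
Definition shift_closed F := forall t A, A \in F -> shift t A \in F.
Definition shifts G := [set shift t B | B in G, t in [set: I]].

Lemma shiftD t u A : shift t (shift u A) = shift (t + u)%R A.
Proof. by apply/setP => j; rewrite !inE addrA. Qed.

Lemma shiftK t : cancel (shift t) (shift (- t)%R).
Proof. by move=> A; rewrite shiftD addNr; apply/setP => j; rewrite !inE addr0. Qed.

Lemma card_shift t A : #|shift t A| = #|A|.
Proof. exact: (card_preimset _ (addIr t)). Qed.

Lemma shift_closed_layer j : shift_closed (layer I j).
Proof. by move=> t A; rewrite !inE card_shift. Qed.

Lemma shift_closed_shifts G : shift_closed (shifts G).
Proof.
move=> u _ /imset2P[B t BG _ ->]; rewrite shiftD.
by apply/imset2P; exists B (u + t)%R; rewrite ?inE.
Qed.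

Lemma deg_shift_closed F i : shift_closed F -> deg F i * n.+1 = \sum_(A in F) #|A|.
Proof.
move=> closedF; have shift_in t A : (shift t A \in F) = (A \in F).
  by apply/idP/idP => [/(closedF (- t)%R)|/closedF]; rewrite ?shiftK.
have deg_const j : deg F j = deg F i.
  rewrite /deg -[RHS](card_preimset _ (can_inj (shiftK (j - i)%R))).
  by apply: eq_card => A; rewrite !inE shift_in addrC subrK.
by rewrite -sum_deg (eq_bigr _ (fun j _ => deg_const j)) sum_nat_const card_ord mulnC.
Qed.

Lemma deg_shift_closed_layer F j i :
  shift_closed F -> F \subset layer I j -> deg F i * n.+1 = #|F| * j.
Proof.
move=> closedF /subsetP Fj; rewrite deg_shift_closed // -sum_nat_const.
by apply: eq_bigr => A /Fj; rewrite inE => /eqP.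
Qed.

End CyclicShift.

Section MiddleLayer.
Variable k : nat.
Local Notation m := k.*2.+1.
Local Notation I := 'I_m.
Implicit Types (t : I) (A : {set I}) (G : {set {set I}}).

(* Since 2k = -1 in 'I_m, shifting a k-set by t adds t to its phase. *)
Definition phase A : I := ((\sum_(j in A) j) *+ 2)%R.

Lemma phase_shift t A : A \in layer I k -> phase (shift t A) = (phase A + t)%R.
Proof.
rewrite inE => /eqP cardA; rewrite /phase (reindex_inj (addIr (- t)%R)) /=.
rewrite (eq_bigl (mem A)) => [|j]; last by rewrite inE subrK.
have mt0 : (t *+ m = 0)%R by apply: val_inj; rewrite /= Zp_mulrn /= modnMl.
rewrite sumrB sumr_const cardA mulrnBl -mulrnA muln2.
have -> : (t *+ k.*2 = - t)%R by apply/eqP; rewrite -subr_eq0 opprK -mulrSr mt0.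
by rewrite opprK.
Qed.

Definition phase0 := [set A in layer I k | phase A == 0%R].

Lemma card_shifts G : G \subset phase0 -> #|shifts G| = #|G| * m.
Proof.
move=> /subsetP G0; rewrite /shifts curry_imset2X card_in_imset.
  by rewrite cardsX cardsT card_ord.
move=> [B t] [B' t']; rewrite !inE /= => /andP[/G0 B0 _] /andP[/G0 B'0 _] eq_shift.
move: B0 B'0; rewrite !inE => /andP[BL /eqP phB] /andP[B'L /eqP phB'].
have eq_t : t = t'.
  by have := congr1 phase eq_shift; rewrite !phase_shift ?inE // phB phB' !add0r.
by move: eq_shift; rewrite eq_t => /(can_inj (shiftK t')) ->.
Qed.

Lemma layer_shifts : layer I k = shifts phase0.
Proof.
apply/eqP; rewrite eqEsubset; apply/andP; split; apply/subsetP => A.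
  move=> AL; apply/imset2P; exists (shift (- phase A)%R A) (phase A) => //.
    by rewrite inE shift_closed_layer //= phase_shift // addrN.
  by rewrite shiftD addrN; apply/setP => j; rewrite inE addr0.
by move=> /imset2P[B t]; rewrite inE => /andP[BL _] _ ->; apply: shift_closed_layer.
Qed.

Lemma exists_shift_closed_half_layer : ~~ odd 'C(m, k) ->
  exists H : {set {set I}}, [/\ H \subset layer I k, shift_closed H & #|H| * 2 = 'C(m, k)].
Proof.
have := card_shifts _ (subxx phase0); rewrite -layer_shifts card_draws card_ord => ->.
rewrite oddM /= odd_double andbT => even0.
have [Q] : exists Q, Q \in [set Q : {set {set I}} | Q \subset phase0 & #|Q| == #|phase0|./2].
  by apply/set0Pn; rewrite -card_gt0 cards_draws bin_gt0 -divn2 leq_div.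
rewrite inE => /andP[Q0 /eqP cardQ]; exists (shifts Q); split.
- by rewrite layer_shifts; apply: imset2S.
- exact: shift_closed_shifts.
- by rewrite card_shifts // cardQ mulnAC muln2 halfK (negPf even0) subn0.
Qed.

Lemma bin_mid : 'C(m, k.+1) = 'C(m, k).
Proof. by rewrite -bin_sub -addnn; [congr 'C(_, _); lia | lia]. Qed.

Lemma balanced_family : ~~ odd 'C(m, k.+1) ->
  exists W : {set {set I}}, #|W| * 2 = 2 ^ m + 'C(m, k.+1) /\
    forall i, deg W i * 4 = #|W| * 2 + 'C(m, k.+1).
Proof.
rewrite bin_mid => /exists_shift_closed_half_layer[H [HL closedH cardH]].
have disj : [disjoint upper I k & H].
  apply: disjointWr HL _; rewrite -setI_eq0; apply/eqP/setP => A; rewrite !inE; lia.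
have cardW : #|upper I k :|: H| = #|upper I k| + #|H|.
  by rewrite cardsU (disjoint_setI0 disj) cards0 subn0.
exists (upper I k :|: H); split.
  by rewrite cardW mulnDl cardH card_upper_half ?card_ord.
move=> i; apply/eqP; rewrite -(eqn_pmul2r (ltn0Sn k.*2)); apply/eqP.
have degL := deg_shift_closed_layer _ _ i (shift_closed_layer k.+1) (subxx _).
have degH := deg_shift_closed_layer _ _ i closedH HL.
rewrite card_draws card_ord bin_mid in degL.
have /(congr1 (muln^~ m)) /= := deg_upper _ k i.
rewrite deg_setU // cardW; move: cardH degL degH.
by move: (deg (upper I k) i) (deg H i) (deg (layer I k.+1) i) #|upper I k| #|H|; nia.
Qed.

End MiddleLayer.

Lemma bin_mid_even k : ~ (exists a, k.+1 = 2 ^ a) -> ~~ odd 'C(k.*2.+1, k.+1).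
Proof.
move=> not_pow2; have := four_dvd_bin_double _ (ltn0Sn k) not_pow2.
rewrite doubleS binS -bin_mid addnn -mul2n.
by rewrite -[4]/(2 * 2) dvdn_pmul2l // dvdn2.
Qed.

Local Open Scope ring_scope.

Lemma sum_sign (R : nzRingType) (T : finType) (U : {set T}) (P : pred T) :
  \sum_(x in U) (if P x then 1 else -1 : R) = #|U :&: [set x | P x]|%:R *+ 2 - #|U|%:R.
Proof.
rewrite -(cardsID [set x | P x] U) natrD mulr2n opprD addrACA subrr add0r.
rewrite (big_setID [set x | P x]) /= (eq_bigr (fun=> 1)) => [|x]; last first.
  by rewrite !inE => /andP[_ ->].
rewrite [X in _ + X](eq_bigr (fun=> -1)) => [|x]; last by rewrite !inE => /andP[/negPf -> _].
by rewrite !sumr_const -mulNrn.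
Qed.

Lemma sum_sub_half_le (R : realFieldType) (T : finType) (S W : {set T}) (x : T -> R) :
  W \subset S -> (forall s, s \in S -> -1 <= x s <= 1) ->
  \sum_(s in W) x s - 2^-1 * \sum_(s in S) x s <= #|S|%:R / 2.
Proof.
move=> /subsetP WS x_bound.
have -> : \sum_(s in W) x s = \sum_(s in S) (if s \in W then x s else 0).
  rewrite big_mkcond [RHS]big_mkcond; apply: eq_bigr => s _.
  by have := WS s; case: (s \in W); case: (s \in S) => // /(_ isT).
rewrite mulr_sumr -sumrB -sum1_card natr_sum mulr_suml.
apply: ler_sum => s sS; have := x_bound s sS; case: (s \in W); lra.
Qed.

Section ExtendedPatterns.
Context {n : nat}.
Implicit Types (A : {set 'I_n}) (U : {set {set 'I_n}}).

Definition ext A : {ffun 'I_n.+1 -> bool} :=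
  [ffun i => if unlift ord0 i is Some j then j \in A else true].

Lemma ext0 A : ext A ord0.
Proof. by rewrite ffunE unlift_none. Qed.

Lemma ext_lift A j : ext A (lift ord0 j) = (j \in A).
Proof. by rewrite ffunE liftK. Qed.

Lemma ext_inj : injective ext.
Proof. by move=> A B eqAB; apply/setP => j; rewrite -!ext_lift eqAB. Qed.

Lemma Vidx_ext : Vidx n.+1 = ext @: setT.
Proof.
apply/setP => s; rewrite inE; apply/forallP/imsetP => [s0 | [A _ ->] i].
  exists [set j | s (lift ord0 j)] => //; apply/ffunP => i; rewrite ffunE.
  case: unliftP => [j -> | ->]; first by rewrite inE.
  by have := s0 ord0.
by apply/implyP => /eqP i0; rewrite (_ : i = ord0) ?ext0 //; apply: val_inj.
Qed.

Lemma card_Vidx : #|Vidx n.+1| = (2 ^ n)%N.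
Proof. by rewrite Vidx_ext card_imset ?cardsT ?card_set ?card_ord //; apply: ext_inj. Qed.

Variable R : realFieldType.

Lemma sum_ext_ord0 U : (\sum_(s in ext @: U) sign_vec R n.+1 s) ord0 ord0 = #|U|%:R.
Proof.
rewrite summxE big_imset /=; last exact: in2W ext_inj.
by rewrite (eq_bigr (fun=> 1)) ?sumr_const // => A _; rewrite mxE ext0.
Qed.

Lemma sum_ext_lift U (j : 'I_n) :
  (\sum_(s in ext @: U) sign_vec R n.+1 s) ord0 (lift ord0 j) = (deg U j)%:R *+ 2 - #|U|%:R.
Proof.
rewrite summxE big_imset /=; last exact: in2W ext_inj.
by under eq_bigr => A _ do rewrite mxE ext_lift; rewrite sum_sign.
Qed.

Lemma sum_Vidx_ord0 : (\sum_(s in Vidx n.+1) sign_vec R n.+1 s) ord0 ord0 = (2 ^ n)%:R.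
Proof. by rewrite Vidx_ext sum_ext_ord0 cardsT card_set card_ord. Qed.

Lemma sum_Vidx_lift (j : 'I_n) : (\sum_(s in Vidx n.+1) sign_vec R n.+1 s) ord0 (lift ord0 j) = 0.
Proof.
rewrite Vidx_ext sum_ext_lift -mulrnA card_deg_setT.
by rewrite cardsT card_set card_ord subrr.
Qed.

End ExtendedPatterns.

Section SubsetSums.
Variable R : realFieldType.

Lemma inShift_inK n (y : 'rV[R]_n.+2) : inShift R n.+2 y -> inK R n.+2 (Mval R n.+2) y.
Proof.
move=> [_ [W WV ->] ->] i; rewrite !mxE !summxE /Mval !subSS subn0 mulr1 lerD2r.
have sign_bound s : s \in Vidx n.+2 -> -1 <= sign_vec R n.+2 s ord0 i <= 1.
  by rewrite mxE; case: (s i) => _; lra.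
have := @sum_sub_half_le R _ _ _ (fun s => sign_vec R n.+2 s ord0 i) WV sign_bound.
by rewrite card_Vidx natrX exprS mulrAC divff ?mul1r ?pnatr_eq0.
Qed.

Lemma zero_inShift k : ~~ odd 'C(k.*2.+1, k.+1) -> inShift R k.*2.+2 0.
Proof.
move=> /balanced_family[W [cardW degW]].
exists (\sum_(s in ext @: W) sign_vec R _ s).
  by exists (ext @: W) => //; rewrite Vidx_ext imsetS ?subsetT.
move/(congr1 (fun x => x%:R : R)): cardW; rewrite natrD !natrM => cardW.
apply/rowP => i; rewrite !mxE /cst /= doubleK.
case: (unliftP ord0 i) => [j -> | ->].
  move/(congr1 (fun x => x%:R : R)): (degW j); rewrite natrD !natrM => degWj.
  by rewrite sum_ext_lift sum_Vidx_lift mulr2n; lra.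
by rewrite sum_ext_ord0 sum_Vidx_ord0; lra.
Qed.

End SubsetSums.

Theorem lemma4p4 (R : realType) (n : nat) (n_pos : (0 < n)%N) (n_even : ~~ odd n)
  (n_not_pow2 : ~ (exists k : nat, n = (2 ^ k)%N)) :
  inShift R n (0 : 'rV[R]_n) /\
  (forall y : 'rV[R]_n, inShift R n y -> inK R n (Mval R n) y).
Proof.
have [k def_n] : exists k, n = k.*2.+2.
  by exists n./2.-1; move: n_pos n_even; rewrite -{1 2 3}(odd_double_half n); lia.
have not_pow2 : ~ exists a, k.+1 = (2 ^ a)%N.
  by move=> [a def_k]; apply: n_not_pow2; exists a.+1; rewrite def_n expnS -def_k mul2n.
by subst n; split; [apply: zero_inShift; apply: bin_mid_even | apply: inShift_inK].
Qed.
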